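(* Let $A$ be an $n\times m$ matrix with entries in $\{0,1,-1\}$, $n\ge 2$. (i) If each column of $A$ has at most two nonzero entries, then for each $B\in\mathcal{Q}_0(A^t)$, $AB$ and $(AB)^{[2]}$ are $P_0$-matrices, and $AB$ is positive semistable. (ii) If each row of $A$ has at most two nonzero entries, then for each $B\in\mathcal{Q}_0(A^t)$, $AB$ is positive semistable.
   Context: For $M\in\mathbb{R}^{n\times m}$, $\mathcal{Q}(M)$ is the set of real matrices with the same entrywise sign pattern as $M$, and $\mathcal{Q}_0(M)$ its closure. A square real matrix is a $P_0$-matrix if all principal minors are nonnegative, and positive semistable if all eigenvalues have nonnegative real part. $M^{[2]}$ denotes the second additive compound of $M\in\mathbb{R}^{n\times n}$: the matrix of $u\wedge v\mapsto Mu\wedge v+u\wedge Mv$ on $\Lambda^2\mathbb{R}^n$ in the lexicographically ordered basis $e_i\wedge e_j$, $i<j$. *)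

From HB Require Import structures.
From mathcomp Require Import all_boot all_order all_algebra.
From mathcomp Require Import complex.
Set Implicit Arguments. Unset Strict Implicit. Unset Printing Implicit Defensive.
Import Order.TTheory GRing.Theory Num.Theory.
Local Open Scope ring_scope.

Definition in_Q (R : realDomainType) n m (M B : 'M[R]_(n, m)) : Prop :=
  forall i j, Num.sg (B i j) = Num.sg (M i j).

(* Q_0(M): closure of Q(M), i.e. each entry of B is 0 or has the sign of
   the corresponding entry of M. *)
Definition in_Q0 (R : realDomainType) n m (M B : 'M[R]_(n, m)) : Prop :=
  forall i j, Num.sg (B i j) = 0 \/ Num.sg (B i j) = Num.sg (M i j).

Definition principal_submx (R : pzRingType) n (M : 'M[R]_n) (S : {set 'I_n}) :
  'M[R]_#|S| := \matrix_(i, j) M (enum_val i) (enum_val j).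

Definition P0_matrix (R : realDomainType) n (M : 'M[R]_n) : Prop :=
  forall S : {set 'I_n}, 0 <= \det (principal_submx M S).

Definition pos_semistable (R : rcfType) n (M : 'M[R]_n) : Prop :=
  forall z : R[i], eigenvalue (map_mx (@real_complex R) M) z -> 0 <= complex.Re z.

(* basis e_i /\ e_j, i < j, in lexicographic order *)
Definition wedge_pairs n : seq ('I_n * 'I_n) :=
  [seq (i, j) | i : 'I_n <- enum 'I_n, j : 'I_n <- filter (fun j : 'I_n => (i < j)%N) (enum 'I_n)].

Definition wp n (p : 'I_(size (wedge_pairs n))) : 'I_n * 'I_n :=
  tnth (in_tuple (wedge_pairs n)) p.

(* second additive compound: matrix of u/\v |-> Mu/\v + u/\Mv in the basis
   (e_i /\ e_j)_{i<j}, lexicographically ordered.  Entry in row e_k/\e_l,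
   column e_i/\e_j is the coefficient of e_k/\e_l in
   M e_i /\ e_j + e_i /\ M e_j. *)
Definition compound2 (R : pzRingType) n (M : 'M[R]_n) :
  'M[R]_(size (wedge_pairs n)) :=
  \matrix_(r, c)
    let: (k, l) := wp r in let: (i, j) := wp c in
      (j == l)%:R * M k i - (j == k)%:R * M l i
    + (i == k)%:R * M l j - (i == l)%:R * M k j.

From mathcomp Require Import all_boot all_order all_algebra.
From mathcomp Require Import complex polyrcf.
From mathcomp.algebra_tactics Require Import lra.
Import Order.TTheory GRing.Theory Num.Theory.
Local Open Scope ring_scope.
Set Implicit Arguments. Unset Strict Implicit. Unset Printing Implicit Defensive.

(* Under hypothesis (i), N := AB is column diagonally dominant with nonnegative
   diagonal: B k j contributes A j k * B k j = |B k j| to N j j, and at most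
   |B k j| to the rest of column j, because column k of A has at most one other
   nonzero entry, of modulus 1.  By Gershgorin's theorem (for columns) every
   eigenvalue z of such an N satisfies |z - N j j| <= N j j for some j, so
   Re z >= 0, and real eigenvalues are >= 0.  The latter makes det N >= 0: the
   characteristic polynomial of -N is monic, equals det N at 0 and has no
   positive root.  Column dominance passes to principal submatrices and to the
   second additive compound, whence the P_0 properties.  For (ii), (AB)^T =
   B^T A^T has the same nonzero eigenvalues as A^T B^T, to which (i) applies. *)

Definition col_dominant (R : numDomainType) n (N : 'M[R]_n) :=
  forall j, \sum_(i | i != j) `|N i j| <= N j j.

Lemma gershgorin_col (C : numFieldType) n (N : 'M[C]_n) (v : 'rV[C]_n) z :
  v *m N = z *: v -> v != 0 ->
  exists j, `|z - N j j| <= \sum_(i | i != j) `|N i j|.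
Proof.
move=> vN_zv /matrix0Pn[i1 [i0 vi0_neq0]]; rewrite (ord1 i1) in vi0_neq0.
have norm_cmp i k : (`|v 0 i| >=< `|v 0 k|)%O.
  exact: real_comparable (normr_real _) (normr_real _).
have [j _ vj_max] := @comparable_arg_maxP _ _ _ i0 predT (fun i => `|v 0 i|) isT
  (fun i k _ _ => norm_cmp i k).
exists j.
have vj_gt0 : 0 < `|v 0 j| by apply: lt_le_trans (vj_max i0 isT); rewrite normr_gt0.
rewrite -(ler_pM2r vj_gt0) -normrM.
have -> : (z - N j j) * v 0 j = \sum_(i | i != j) v 0 i * N i j.
  move/matrixP/(_ 0 j): vN_zv; rewrite !mxE (bigD1 j) //= => vNj.
  by rewrite mulrBl -vNj mulrC addrAC subrr add0r.
rewrite mulr_suml; apply: le_trans (ler_norm_sum _ _ _) _.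
apply: ler_sum => i _; rewrite normrM mulrC.
by apply: ler_wpM2l => //; apply: vj_max.
Qed.

Lemma col_dominant_eigenvalue_disc (C : numFieldType) n (N : 'M[C]_n) z :
  col_dominant N -> eigenvalue N z -> exists j, `|z - N j j| <= N j j.
Proof.
move=> Ndom /eigenvalueP[v vN_zv v_neq0].
have [j zj] := gershgorin_col vN_zv v_neq0.
by exists j; apply: le_trans zj (Ndom j).
Qed.

Lemma col_dominant_eigenvalue_ge0 (R : realFieldType) n (N : 'M[R]_n) z :
  col_dominant N -> eigenvalue N z -> 0 <= z.
Proof.
move=> Ndom /(col_dominant_eigenvalue_disc Ndom)[j].
by rewrite ler_distl subrr => /andP[].
Qed.

Lemma col_dominant_det_ge0 (R : rcfType) n (N : 'M[R]_n) :
  col_dominant N -> 0 <= \det N.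
Proof.
move=> Ndom; rewrite leNgt; apply/negP => detN_lt0.
pose p := char_poly (- N).
have p0 : p.[0] = \det N.
  rewrite horner_coef0 char_poly_det -scaleN1r detZ mulrA -exprMn.
  by rewrite mulrNN mulr1 expr1n mul1r.
have p_root_le0 x : root p x -> x <= 0.
  rewrite -eigenvalue_root_char => /eigenvalueP[v vN v_neq0].
  rewrite -oppr_ge0; apply: (col_dominant_eigenvalue_ge0 Ndom).
  by apply/eigenvalueP; exists v; rewrite // scaleNr -vN mulmxN opprK.
have lc_gt0 : 0 < lead_coef p by rewrite (monicP (char_poly_monic _)).
have [b0 pb_ge] := poly_pinfty_gt_lc lc_gt0.
have [x /andP[x_ge0 _] px] : exists2 x, 0 <= x <= Num.max b0 0 & root p x.
  apply: poly_ivt; first by rewrite le_max lexx orbT.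
  rewrite p0 (ltW detN_lt0) /=; apply: le_trans (ltW lc_gt0) (pb_ge _ _).
  by rewrite le_max lexx.
have x0 : x = 0 by apply/eqP; rewrite eq_le x_ge0 p_root_le0.
by move: px; rewrite /root x0 p0 (negPf (ltr0_neq0 detN_lt0)).
Qed.

Lemma col_dominant_principal_submx (R : numDomainType) n (M : 'M[R]_n) S :
  col_dominant M -> col_dominant (principal_submx M S).
Proof.
move=> Mdom j.
have -> : \sum_(i | i != j) `|principal_submx M S i j|
    = \sum_(x in S | x != enum_val j) `|M x (enum_val j)|.
  rewrite big_enum_val_cond /=.
  by apply: eq_big => i; [rewrite (inj_eq enum_val_inj) | rewrite mxE].
rewrite mxE; apply: le_trans (Mdom _); rewrite [leRHS](bigID [in S]) /=.
by rewrite (eq_bigl _ _ (fun i => andbC _ _)) lerDl sumr_ge0.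
Qed.

Lemma col_dominant_P0 (R : rcfType) n (M : 'M[R]_n) : col_dominant M -> P0_matrix M.
Proof. by move=> Mdom S; apply/col_dominant_det_ge0/col_dominant_principal_submx. Qed.

Local Open Scope complex_scope.

Lemma normc_real (R : rcfType) (x : R) : `|x%:C| = `|x|%:C.
Proof. by rewrite normc_def /= expr0n /= addr0 sqrtr_sqr. Qed.

Lemma col_dominant_map_complex (R : rcfType) n (N : 'M[R]_n) :
  col_dominant N -> col_dominant (map_mx (real_complex R) N).
Proof.
move=> Ndom j; rewrite mxE; under eq_bigr do rewrite mxE normc_real.
by rewrite -rmorph_sum lecR.
Qed.

Lemma Re_ge0_disc (R : rcfType) (z : R[i]) (d : R) :
  `|z - d%:C| <= d%:C -> (0 <= complex.Re z)%R.
Proof.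
move=> zd; have := le_trans (normc_ge_Re _) zd.
by rewrite lecR raddfB /= ler_distl subrr => /andP[].
Qed.

Lemma col_dominant_pos_semistable (R : rcfType) n (N : 'M[R]_n) :
  col_dominant N -> pos_semistable N.
Proof.
move=> /col_dominant_map_complex Ndom z /(col_dominant_eigenvalue_disc Ndom)[j].
by rewrite mxE; apply: Re_ge0_disc.
Qed.

Local Close Scope complex_scope.

Lemma norm_sign_entry (R : realDomainType) (x : R) :
  x \in [:: 0; 1; -1] -> `|x| = (x != 0)%:R.
Proof.
rewrite !inE => /or3P[]/eqP->;
  by rewrite ?normr0 ?normr1 ?normrN1 ?eqxx ?oppr_eq0 ?oner_eq0.
Qed.

Lemma mul_sign_entry_Q0 (R : realDomainType) (a b : R) :
  a \in [:: 0; 1; -1] -> Num.sg b = 0 \/ Num.sg b = Num.sg a -> a * b = `|b|.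
Proof.
move=> a_sign [/eqP|sg_ba]; first by rewrite sgr_eq0 => /eqP->; rewrite mulr0 normr0.
have -> : a = Num.sg a.
  by move: a_sign; rewrite !inE => /or3P[]/eqP->; rewrite ?sgr0 ?sgr1 ?sgrN1.
by rewrite -sg_ba normrEsg.
Qed.

Lemma sum_norm_col_neq_le1 (R : realDomainType) n m (A : 'M[R]_(n, m)) j k :
  (forall i, A i k \in [:: 0; 1; -1]) -> (#|[set i | A i k != 0%R]| <= 2)%N ->
  A j k != 0 -> \sum_(i | i != j) `|A i k| <= 1.
Proof.
move=> A_sign col_k Ajk_neq0.
have -> : \sum_(i | i != j) `|A i k| = #|[set i | A i k != 0] :\ j|%:R.
  rewrite -sumr_const big_mkcond [RHS]big_mkcond /=; apply: eq_bigr => i _.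
  by rewrite norm_sign_entry // !inE; case: (i != j); case: (A i k != 0).
rewrite -[leRHS]/(1%:R) ler_nat -ltnS.
by move: col_k; rewrite (cardsD1 j) inE Ajk_neq0.
Qed.

Lemma col_dominant_mulmx (R : realDomainType) n m (A : 'M[R]_(n, m)) (B : 'M[R]_(m, n)) :
  (forall i k, A i k \in [:: 0; 1; -1]) ->
  (forall k, (#|[set i | A i k != 0%R]| <= 2)%N) ->
  in_Q0 A^T B -> col_dominant (A *m B).
Proof.
move=> A_sign A_cols BQ0 j.
have BQ0_jk k : Num.sg (B k j) = 0 \/ Num.sg (B k j) = Num.sg (A j k).
  by have := BQ0 k j; rewrite mxE.
rewrite mxE (eq_bigr _ (fun k _ => mul_sign_entry_Q0 (A_sign j k) (BQ0_jk k))).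
apply: le_trans (_ : \sum_(i | i != j) \sum_k `|A i k| * `|B k j| <= _).
  apply: ler_sum => i _; rewrite mxE; apply: le_trans (ler_norm_sum _ _ _) _.
  by apply: ler_sum => k _; rewrite normrM.
rewrite exchange_big /=; apply: ler_sum => k _; rewrite -mulr_suml.
have [->|Bkj_neq0] := eqVneq (B k j) 0; first by rewrite normr0 mulr0.
have Ajk_neq0 : A j k != 0.
  case: (BQ0_jk k) => [/eqP|sgBA]; first by rewrite sgr_eq0 (negPf Bkj_neq0).
  by rewrite -sgr_eq0 -sgBA sgr_eq0.
by rewrite ler_piMl // sum_norm_col_neq_le1.
Qed.

Lemma sum_wedge_pairs (V : nmodType) n (F : 'I_n -> 'I_n -> V) :
  \sum_r F (wp r).1 (wp r).2 = \sum_(k < n) \sum_(l < n | (k < l)%N) F k l.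
Proof.
rewrite /wp -(big_tnth _ _ _ predT (fun p => F p.1 p.2)).
rewrite /wedge_pairs big_allpairs_dep /= big_enum /=.
by apply: eq_bigr => k _; rewrite big_filter big_enum_cond.
Qed.

Lemma wp_lt n (r : 'I_(size (wedge_pairs n))) : ((wp r).1 < (wp r).2)%N.
Proof.
have := mem_tnth r (in_tuple (wedge_pairs n)); rewrite -/(wp r).
case: (wp r) => i j /allpairsPdep[a [b [_]]].
by rewrite mem_filter => /andP[lt_ab _] [-> ->].
Qed.

Lemma sumr_mulrn_eq (V : nmodType) (I : finType) (P : pred I) (F : I -> V) x :
  \sum_(l | P l) F l *+ (x == l) = F x *+ P x.
Proof.
rewrite big_mkcond (bigD1 x) //= eqxx big1 ?addr0 => [|l /negPf]; first by case: (P x).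
by rewrite eq_sym => ->; case: (P l).
Qed.

Lemma sum_wedge_pairs_incident (V : nmodType) n (f : 'I_n -> V) (x : 'I_n) :
  \sum_r (f (wp r).1 *+ (x == (wp r).2) + f (wp r).2 *+ (x == (wp r).1))
  = \sum_(p | p != x) f p.
Proof.
rewrite (sum_wedge_pairs (fun k l => f k *+ (x == l) + f l *+ (x == k))).
under eq_bigr => k _ do rewrite big_split /= sumr_mulrn_eq sumrMnl.
rewrite big_split /= sumr_mulrn_eq /= mulr1n [RHS](bigID (fun p : 'I_n => (p < x)%N)) /=.
rewrite [in LHS]big_mkcond [in RHS]big_mkcond; congr (_ + _).
  apply: eq_bigr => p _; rewrite mulrb.
  by case: ltngtP => lt_px; rewrite ?andbF ?andbT // neq_ltn lt_px.
by apply: eq_bigl => p; rewrite -leqNgt ltn_neqAle eq_sym.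
Qed.

Lemma col_dominant_compound2 (R : realFieldType) n (M : 'M[R]_n) :
  col_dominant M -> col_dominant (compound2 M).
Proof.
move=> Mdom c; case Ec: (wp c) (wp_lt c) => [i j] /= lt_ij.
have neq_ij : i != j by rewrite neq_ltn lt_ij.
pose a p : R := `|M p i|; pose b p : R := `|M p j|.
pose bound r := a (wp r).1 *+ (j == (wp r).2) + a (wp r).2 *+ (j == (wp r).1)
              + (b (wp r).1 *+ (i == (wp r).2) + b (wp r).2 *+ (i == (wp r).1)).
have entry_le r : `|compound2 M r c| <= bound r.
  rewrite mxE Ec /bound; case: (wp r) => k l /=; rewrite !mulr_natl.
  rewrite /a /b -!normrMn.
  move: (M k i *+ _) (M l i *+ _) (M l j *+ _) (M k j *+ _) => x1 x2 x3 x4.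
  have := ler_normB (x1 - x2 + x3) x4; have := ler_normD (x1 - x2) x3.
  have := ler_normB x1 x2; lra.
have bound_c : bound c = a i + b j.
  by rewrite /bound Ec /= !eqxx (eq_sym j i) (negPf neq_ij) !mulr0n !mulr1n addr0 add0r.
have sum_bound : \sum_r bound r = \sum_(p | p != j) a p + \sum_(p | p != i) b p.
  by rewrite big_split /= !sum_wedge_pairs_incident.
have off_diag_le : \sum_(r | r != c) `|compound2 M r c| <= \sum_r bound r - bound c.
  rewrite [X in _ <= X - _](bigD1 c) //= addrAC subrr add0r.
  by apply: ler_sum => r _; apply: entry_le.
have diag : compound2 M c c = M i i + M j j.
  by rewrite mxE Ec /= !eqxx (eq_sym j i) (negPf neq_ij) !mul1r !mul0r !subr0.
have split_at x (f : 'I_n -> R) : \sum_p f p = f x + \sum_(p | p != x) f p.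
  exact: bigD1.
(* Off the diagonal, column c of compound2 M is dominated by the columns i and j
   of M with their entries in rows i and j removed once each. *)
have := split_at i a; have := split_at j a; have := split_at i b; have := split_at j b.
have := Mdom i; have := Mdom j; have : 0 <= a j := normr_ge0 _; have : 0 <= b i := normr_ge0 _.
rewrite diag sum_bound bound_c in off_diag_le *; lra.
Qed.

Lemma eigenvalue_trmx (F : fieldType) n (M : 'M[F]_n) a :
  eigenvalue M^T a = eigenvalue M a.
Proof.
rewrite !eigenvalue_root_char /char_poly /char_poly_mx -det_tr.
by rewrite linearB /= tr_scalar_mx map_trmx trmxK.
Qed.

Lemma eigenvalue_mulmxC (F : fieldType) n m (A : 'M[F]_(n, m)) (B : 'M[F]_(m, n)) a :
  a != 0 -> eigenvalue (A *m B) a -> eigenvalue (B *m A) a.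
Proof.
move=> a_neq0 /eigenvalueP[v vAB v_neq0]; apply/eigenvalueP; exists (v *m A).
  by rewrite mulmxA -(mulmxA v) vAB scalemxAl.
apply: contraNneq v_neq0 => vA0.
by move: vAB; rewrite mulmxA vA0 mul0mx => /esym/eqP; rewrite scalemx_eq0 (negPf a_neq0).
Qed.

Lemma pos_semistable_trmx (R : rcfType) n (M : 'M[R]_n) :
  pos_semistable M^T -> pos_semistable M.
Proof. by move=> MT_stable z eig; apply: MT_stable; rewrite -map_trmx eigenvalue_trmx. Qed.

Lemma pos_semistable_mulmx_rows (R : rcfType) n m (A : 'M[R]_(n, m)) (B : 'M[R]_(m, n)) :
  (forall i k, A i k \in [:: 0; 1; -1]) ->
  (forall i, (#|[set k | A i k != 0%R]| <= 2)%N) ->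
  in_Q0 A^T B -> pos_semistable (A *m B).
Proof.
move=> A_sign A_rows BQ0; apply: pos_semistable_trmx => z.
have [->|z_neq0] := eqVneq z 0; first by [].
rewrite trmx_mul map_mxM => /(eigenvalue_mulmxC z_neq0); rewrite -map_mxM.
apply: col_dominant_pos_semistable; apply: col_dominant_mulmx.
- by move=> k i; rewrite mxE.
- by move=> k; under eq_finset do rewrite mxE; apply: A_rows.
- by move=> i k; rewrite trmxK !mxE; have := BQ0 k i; rewrite mxE.
Qed.

Unset Implicit Arguments.
Set Strict Implicit.

Theorem proposition4p2 (R : rcfType) (n m : nat) (A : 'M[R]_(n, m)) :
  (2 <= n)%N ->
  (forall i j, A i j \in [:: 0; 1; -1 : R]) ->
  ((forall j, (#|[set i | A i j != 0%R]| <= 2)%N) ->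
     forall B : 'M[R]_(m, n), in_Q0 A^T B ->
       P0_matrix (A *m B) /\ P0_matrix (compound2 (A *m B)) /\
       pos_semistable (A *m B)) /\
  ((forall i, (#|[set j | A i j != 0%R]| <= 2)%N) ->
     forall B : 'M[R]_(m, n), in_Q0 A^T B ->
       pos_semistable (A *m B)).
Proof.
move=> _ A_sign; split=> [A_cols B BQ0 | A_rows B BQ0].
  have ABdom := col_dominant_mulmx A_sign A_cols BQ0.
  split; first exact: col_dominant_P0.
  split; first exact/col_dominant_P0/col_dominant_compound2.
  exact: col_dominant_pos_semistable.
exact: pos_semistable_mulmx_rows.
Qed.
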